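(* Let $-3<\gamma\le1$, $0<\varepsilon\le1$, $\vartheta>0$ sufficiently small and $0<\sigma\le\frac14$, and $\widetilde\vartheta(t)=\vartheta(1+(1+t)^{-\sigma})$. Let $\phi^\varepsilon(t,x)$ satisfy $\sup_{0\le t\le T}\{(1+t)^{5/4}\|\nabla_x\phi^\varepsilon(t)\|_{W^{1,\infty}_x}\}\le\delta$ for a sufficiently small $\delta>0$. Define $\widetilde\nu$ by $$\frac1{\varepsilon^2}\widetilde\nu(t,x,v)=\frac1{\varepsilon^2}\nu(v)+\frac v2\cdot\nabla_x\phi^\varepsilon(t,x)+2\widetilde\vartheta(t)\,v\cdot\nabla_x\phi^\varepsilon(t,x)+\frac{\vartheta\sigma}{(1+t)^{1+\sigma}}|v|^2 .$$ Then, for $0\le t\le T$, $$\frac1{\varepsilon^2}\widetilde\nu\gtrsim\frac1{2\varepsilon^2}\nu(v)+\frac{\langle v\rangle^2}{(1+t)^{1+\sigma}}.$$ In particular, if $-3<\gamma<0$ and $0<\sigma\le\frac1{24}$, then also $$\frac1{\varepsilon^2}\widetilde\nu\gtrsim\varepsilon^{-4/5}(1+t)^{\varrho-1},\qquad\varrho:=\frac{\sigma\gamma+2}{2-\gamma}\in\Big(\frac38,1\Big).$$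
   Context: $\mu(v)=(2\pi)^{-3/2}e^{-|v|^2/2}$, $\langle v\rangle=(1+|v|^2)^{1/2}$, $\nu(v)=\iint_{\mathbb{R}^3\times\mathbb{S}^2}|v-v_*|^\gamma q_0(\theta)\mu(v_* )\mathrm{d}\omega\mathrm{d}v_*$ with $0\le q_0(\theta)\le C|\cos\theta|$ (so $\nu(v)\sim\langle v\rangle^\gamma$). Implicit constants are independent of $\varepsilon$, $t$, $x$, $v$. *)

From HB Require Import structures.
From mathcomp Require Import all_boot all_order all_algebra.
From mathcomp Require Import all_classical all_reals all_analysis.
Set Implicit Arguments. Unset Strict Implicit. Unset Printing Implicit Defensive.
Import Order.TTheory GRing.Theory Num.Theory.
Import numFieldNormedType.Exports.
Local Open Scope classical_set_scope.
Local Open Scope ring_scope.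

Section Defs.
Variable R : realType.
Implicit Types u w x : 'rV[R]_3.

Definition dot u w : R := \sum_(i < 3) u 0 i * w 0 i.
Definition enorm u : R := Num.sqrt (dot u u).
Definition jbr u : R := Num.sqrt (1 + enorm u ^+ 2).

Definition maxw u : R := (2 * pi) `^ (- (3 / 2)) * expR (- (enorm u ^+ 2) / 2).

(* unit vector omega in S^2 in spherical coordinates (al in [0,pi], be in [0,2pi]) *)
Definition sph (al be : R) : 'rV[R]_3 :=
  \row_(i < 3) [:: sin al * cos be; sin al * sin be; cos al]`_i.

Definition vec3 (a b c : R) : 'rV[R]_3 := \row_(i < 3) [:: a; b; c]`_i.

(* collision frequency
   nu(v) = \iint_{R^3 x S^2} |v - v_*|^gamma q0(theta) mu(v_* ) d omega d v_*,
   cos theta = omega . (v - v_* ) / |v - v_*|, the surface measure on S^2 being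
   sin(al) d al d be in spherical coordinates; written as iterated Lebesgue
   integrals of a nonnegative integrand. *)
Definition nu_coll (gamma : R) (q0 : R -> R) u : R :=
  fine (\int[@lebesgue_measure R]_a \int[@lebesgue_measure R]_b
        \int[@lebesgue_measure R]_c
        \int[@lebesgue_measure R]_(al in (`[0%R, pi]%classic : set R))
        \int[@lebesgue_measure R]_(be in (`[0%R, (2 * pi)%R]%classic : set R))
          ((let w := vec3 a b c in
           enorm (u - w) `^ gamma
           * q0 (acos (dot (sph al be) (u - w) / enorm (u - w)))
           * maxw w * sin al)%R)%:E)%E.

Definition grad (f : 'rV[R]_3 -> R) x : 'rV[R]_3 :=
  \row_(i < 3) ('D_(delta_mx 0 i) f x).

Definition vth_tilde (vth sigma t : R) : R := vth * (1 + (1 + t) `^ (- sigma)).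

(* (1/eps^2) nu~(t,x,v), i.e. the right-hand side of the defining identity *)
Definition nu_tilde_eps (nu : 'rV[R]_3 -> R) (eps vth sigma : R)
  (phi : R -> 'rV[R]_3 -> R) (t : R) x u : R :=
  nu u / eps ^+ 2
  + dot (2^-1 *: u) (grad (phi t) x)
  + 2 * vth_tilde vth sigma t * dot u (grad (phi t) x)
  + vth * sigma / (1 + t) `^ (1 + sigma) * enorm u ^+ 2.

End Defs.

(* The drift [v . grad phi] is at most [|v| |grad phi| <= delta |v| (1+t)^-(1+sigma)]
   (this uses [sigma <= 1/4]), so for [delta] small it is absorbed by the coercive
   part [nu/eps^2 + vth sigma |v|^2 (1+t)^-(1+sigma)]: for [|v| >= 1] by the weight
   term, for [|v| < 1] by [nu/eps^2 >= nu >~ <v>^gamma >~ 1].  The second bound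
   follows from the first: [eps^(-4/5) (1+t)^(rho-1)] is dominated by a weighted
   geometric mean of [eps^-2 <v>^gamma] and [<v>^2 (1+t)^-(1+sigma)] in which the
   powers of [<v>] cancel. *)

From HB Require Import structures.
From mathcomp Require Import all_boot all_order all_algebra.
From mathcomp Require Import all_classical all_reals all_analysis.
From mathcomp Require Import ring lra.
Set Implicit Arguments. Unset Strict Implicit. Unset Printing Implicit Defensive.
Import Order.TTheory GRing.Theory Num.Theory.
Import numFieldNormedType.Exports.
Local Open Scope ring_scope.

Section Euclidean.
Variable R : realType.
Implicit Types (a : R) (u w : 'rV[R]_3).

Lemma dotE u w : dot u w = u 0 0 * w 0 0 + u 0 1 * w 0 1 + u 0 2%:R * w 0 2%:R.
Proof.
rewrite /dot !big_ord_recr big_ord0 /= add0r.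
by congr (u 0 _ * w 0 _ + u 0 _ * w 0 _ + u 0 _ * w 0 _); apply: val_inj.
Qed.

Lemma dotZl a u w : dot (a *: u) w = a * dot u w.
Proof. by rewrite !dotE !mxE; ring. Qed.

Lemma dot_ge0 u : 0 <= dot u u.
Proof. by rewrite dotE; nra. Qed.

Lemma enorm_ge0 u : 0 <= enorm u.
Proof. exact: sqrtr_ge0. Qed.

Lemma enorm_sqr u : enorm u ^+ 2 = dot u u.
Proof. by rewrite /enorm sqr_sqrtr // dot_ge0. Qed.

Lemma dot_cauchy_schwarz u w : `|dot u w| <= enorm u * enorm w.
Proof.
rewrite -ler_sqr ?nnegrE ?mulr_ge0 ?enorm_ge0 // real_normK ?num_real //.
rewrite exprMn !enorm_sqr !dotE.
set a := u 0 0; set b := u 0 1; set c := u 0 2%:R.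
set x := w 0 0; set y := w 0 1; set z := w 0 2%:R.
have lagrange : (a*a + b*b + c*c) * (x*x + y*y + z*z) - (a*x + b*y + c*z) ^+ 2
  = (a*y - b*x) ^+ 2 + (a*z - c*x) ^+ 2 + (b*z - c*y) ^+ 2 by ring.
rewrite -subr_ge0 lagrange.
by rewrite !addr_ge0 // sqr_ge0.
Qed.

Lemma jbr_sqr u : jbr u ^+ 2 = 1 + enorm u ^+ 2.
Proof. by rewrite /jbr sqr_sqrtr // addr_ge0 // sqr_ge0. Qed.

Lemma jbr_ge1 u : 1 <= jbr u.
Proof.
have r0 : 0 <= jbr u := sqrtr_ge0 _.
have := jbr_sqr u; have := sqr_ge0 (enorm u); nra.
Qed.

Lemma jbr_powR_ge (gamma : R) u : -3 <= gamma -> enorm u < 1 -> 4^-1 <= jbr u `^ gamma.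
Proof.
move=> gamma_ge enorm_lt1.
have r1 := jbr_ge1 u.
have r_le2 : jbr u <= 2 by have := jbr_sqr u; have := enorm_ge0 u; nra.
have r3_le4 : jbr u ^+ 3 <= 4 by have := jbr_sqr u; have := enorm_ge0 u; nra.
apply: le_trans (ler_powR r1 gamma_ge).
rewrite powRN powR_mulrn ?(le_trans ler01) // lef_pV2 ?posrE //.
by rewrite exprn_gt0 // (lt_le_trans ltr01).
Qed.

Lemma enorm_le_of_W1inf_le (f : 'rV[R]_3 -> 'rV[R]_3) (wt d : R) :
  0 <= wt ->
  (forall x y z, y != z -> wt * (enorm (f x) + enorm (f y - f z) / enorm (y - z)) <= d) ->
  forall x, wt * enorm (f x) <= d.
Proof.
move=> wt0 hf x.
have neq : (0 : 'rV[R]_3) != const_mx 1.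
  by apply/eqP => /matrixP /(_ 0 0) /eqP; rewrite !mxE eq_sym oner_eq0.
apply: le_trans (hf x _ _ neq); rewrite ler_wpM2l // lerDl.
by rewrite divr_ge0 // enorm_ge0.
Qed.

End Euclidean.

Section Weights.
Variable R : realType.
Implicit Types a s t x : R.

Lemma gt0_powRE a x : 0 < a -> a `^ x = expR (x * ln a).
Proof. by move=> a0; rewrite -{1}(lnK a0) -expRM mulrC. Qed.

Lemma powR_ge1 a x : 1 <= a -> 0 <= x -> 1 <= a `^ x.
Proof. by move=> a1 x0; rewrite -(powRr0 a) ler_powR. Qed.

Lemma vth_tilde_bound (vth sigma t : R) : 0 <= vth -> 0 <= sigma -> 0 <= t ->
  0 <= vth_tilde vth sigma t <= 2 * vth.
Proof.
move=> vth0 sigma0 t0; rewrite /vth_tilde.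
have w_ge1 : 1 <= (1 + t) `^ sigma by rewrite powR_ge1 // lerDl.
have w1 : (1 + t) `^ (- sigma) <= 1.
  by rewrite powRN invf_le1 // (lt_le_trans ltr01).
have w0 := powR_ge0 (1 + t) (- sigma); apply/andP; split; nra.
Qed.

Lemma expR_convex_le_add (th u1 u2 : R) : 0 <= th <= 1 ->
  expR (th * u1 + (1 - th) * u2) <= expR u1 + expR u2.
Proof.
move=> /andP[th0 th1].
have [le_u12|lt_u21] := lerP u1 u2.
- have : expR (th * u1 + (1 - th) * u2) <= expR u2 by rewrite ler_expR; nra.
  by have := expR_gt0 u1; lra.
- have : expR (th * u1 + (1 - th) * u2) <= expR u1 by rewrite ler_expR; nra.
  by have := expR_gt0 u2; lra.
Qed.

Lemma interpolation_exponent_bounds (gamma sigma : R) :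
  -3 < gamma < 0 -> 0 < sigma <= 24^-1 ->
  3 / 8 < (sigma * gamma + 2) / (2 - gamma) < 1.
Proof.
move=> /andP[g3 g0] /andP[s0 s24]; have d0 : 0 < 2 - gamma by lra.
rewrite ltr_pdivlMr // ltr_pdivrMr // mul1r; apply/andP; split; nra.
Qed.

(* Weighted AM-GM with weights [2/(2-gamma)] and [-gamma/(2-gamma)]: the powers
   of [r] cancel, and [eps^(-4/(2-gamma)) >= eps^(-4/5)] since [gamma > -3]. *)
Lemma interpolation (gamma sigma eps t r : R) :
  -3 < gamma <= 0 -> 0 <= sigma -> 0 < eps <= 1 -> 0 <= t -> 0 < r ->
  eps `^ (- (4 / 5)) * (1 + t) `^ ((sigma * gamma + 2) / (2 - gamma) - 1)
    <= r `^ gamma / eps ^+ 2 + r ^+ 2 / (1 + t) `^ (1 + sigma).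
Proof.
move=> /andP[g3 g0] s0 /andP[e0 e1] t0 r0.
have d0 : 0 < 2 - gamma by lra.
have t1 : 0 < 1 + t by lra.
have L0 : ln eps <= 0 by rewrite ln_le0.
rewrite -!(powR_mulrn 2) ?(ltW r0) ?(ltW e0) // !gt0_powRE // -!expRB -expRD.
pose th := 2 / (2 - gamma).
have th01 : 0 <= th <= 1.
  by rewrite divr_ge0 ?(ltW d0) //= ler_pdivrMr // mul1r; lra.
apply: le_trans (expR_convex_le_add _ _ th01); rewrite ler_expR.
have gap : th * (gamma * ln r - 2%:R * ln eps)
             + (1 - th) * (2%:R * ln r - (1 + sigma) * ln (1 + t))
           - (- (4 / 5) * ln eps + ((sigma * gamma + 2) / (2 - gamma) - 1) * ln (1 + t))
         = - ln eps * (4 / (2 - gamma) - 4 / 5).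
  by rewrite /th; field; lra.
rewrite -subr_ge0 gap mulr_ge0 ?oppr_ge0 // subr_ge0.
by rewrite ler_pdivlMr //; lra.
Qed.

End Weights.

Section LowerBound.
Variable R : realType.

Lemma coercive_part (A B s b k : R) :
  0 <= A -> 0 <= B <= 1 -> 0 <= s -> 0 <= k -> 2 * k <= b ->
  (s < 1 -> 2 * k <= A) -> k * ((1 + s) * B) <= A + b * B * s.
Proof.
move=> A0 /andP[B0 B1] s0 k0 kb kA.
have [s1|s1] := lerP 1 s.
- have : 0 <= k * B * (s - 1) by rewrite !mulr_ge0 // subr_ge0.
  have : 0 <= (b - 2 * k) * B * s by rewrite !mulr_ge0 // subr_ge0.
  lra.
- have : k * ((1 + s) * B) <= k * 2 by rewrite ler_wpM2l //; nra.
  have : 0 <= b * B * s by rewrite !mulr_ge0 //; lra.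
  have := kA s1; lra.
Qed.

Lemma drift_bound (K k P : R) (u w : 'rV[R]_3) :
  0 <= K <= 5 -> 0 < P -> P * enorm w <= k / 10 ->
  `|K * dot u w| <= k / 4 * ((1 + enorm u ^+ 2) / P).
Proof.
move=> /andP[K0 K5] P0 Pw.
have e0 := enorm_ge0 u; have g0 := enorm_ge0 w.
set q := k / 10 / P.
have g_le : enorm w <= q by rewrite ler_pdivlMr // mulrC.
have q0 : 0 <= q := le_trans g0 g_le.
have -> : k / 4 * ((1 + enorm u ^+ 2) / P) = 5 / 2 * q * (1 + enorm u ^+ 2).
  by rewrite /q; field; rewrite gt_eqF.
rewrite normrM ger0_norm //.
apply: le_trans (ler_wpM2l K0 (dot_cauchy_schwarz u w)) _.
have : enorm u * enorm w <= enorm u * q by rewrite ler_wpM2l.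
have : K * (enorm u * enorm w) <= 5 * (enorm u * enorm w) by rewrite ler_wpM2r ?mulr_ge0.
have : 0 <= q * (enorm u - 1) ^+ 2 by rewrite mulr_ge0 ?sqr_ge0.
lra.
Qed.

Lemma nu_tilde_eps_ge (nu : 'rV[R]_3 -> R) (phi : R -> 'rV[R]_3 -> R)
    (gamma c1 eps vth sigma k t : R) x v :
  -3 <= gamma -> c1 * jbr v `^ gamma <= nu v -> 0 < eps <= 1 ->
  0 < vth <= 1 -> 0 <= sigma -> 0 <= t ->
  0 <= k -> 8 * k <= c1 -> 2 * k <= vth * sigma ->
  (1 + t) `^ (1 + sigma) * enorm (grad (phi t) x) <= k / 10 ->
  nu v / (2 * eps ^+ 2) + k / 4 * (jbr v ^+ 2 / (1 + t) `^ (1 + sigma))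
    <= nu_tilde_eps nu eps vth sigma phi t x v.
Proof.
move=> g3 nu_ge /andP[e0 e1] /andP[vth0 vth1] s0 t0 k0 kc1 kvs Pg.
set P := (1 + t) `^ (1 + sigma); set G := grad (phi t) x.
have P1 : 1 <= P by rewrite powR_ge1 ?lerDl ?addr_ge0.
have P0 : 0 < P by exact: lt_le_trans ltr01 P1.
set A := nu v / eps ^+ 2; set s := enorm v ^+ 2.
have s0' : 0 <= s by exact: sqr_ge0.
have ie1 : 1 <= (eps ^+ 2)^-1 by rewrite invf_ge1 ?exprn_gt0 //; nra.
have nu0 : 0 <= nu v by apply: le_trans _ nu_ge; rewrite mulr_ge0 ?powR_ge0 //; lra.
have A_ge : nu v <= A by rewrite /A -[leLHS]mulr1 ler_wpM2l.
have small_v : s < 1 -> 2 * k <= A.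
  move=> s1; have v1 : enorm v < 1 by rewrite -(expr_lt1 (n := 2)) ?enorm_ge0.
  have c10 : 0 <= c1 by lra.
  have := ler_wpM2l c10 (jbr_powR_ge g3 v1); lra.
have A0 : 0 <= A by rewrite divr_ge0 ?sqr_ge0.
have B01 : 0 <= P^-1 <= 1 by rewrite invr_ge0 ltW //= invf_le1.
have coercive := coercive_part A0 B01 s0' k0 kvs small_v.
have K_bound : 0 <= 2^-1 + 2 * vth_tilde vth sigma t <= 5.
  have /andP[vt0 vt2] := vth_tilde_bound (ltW vth0) s0 t0.
  by apply/andP; split; lra.
have drift := drift_bound v K_bound P0 Pg.
have -> : nu_tilde_eps nu eps vth sigma phi t x v
          = A + (2^-1 + 2 * vth_tilde vth sigma t) * dot v G
              + vth * sigma * P^-1 * s.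
  by rewrite /nu_tilde_eps dotZl -/P -/G -/A -/s; ring.
rewrite jbr_sqr -/s.
have -> : nu v / (2 * eps ^+ 2) = A / 2 by rewrite /A invfM; ring.
move: drift; rewrite -/s => /ler_normlP [drift _].
have : 0 <= vth * sigma * P^-1 * s.
  by case/andP: B01 => B0 _; rewrite mulr_ge0 // !mulr_ge0 // ltW.
lra.
Qed.

End LowerBound.

Theorem lemma3p1 (R : realType) (gamma C0 : R) (q0 : R -> R) :
  -3 < gamma <= 1 ->
  (forall th : R, 0 <= q0 th <= C0 * `|cos th|) ->
  (* standing fact from the context: nu(v) ~ <v>^gamma *)
  (exists c1 c2 : R, 0 < c1 /\ 0 < c2 /\
     forall v : 'rV[R]_3, c1 * jbr v `^ gamma <= nu_coll gamma q0 v <= c2 * jbr v `^ gamma) ->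
  forall sigma : R, 0 < sigma <= 4^-1 ->
  exists vth0 : R, 0 < vth0 /\
  forall vth : R, 0 < vth <= vth0 ->
  exists delta c : R, 0 < delta /\ 0 < c /\
  forall (eps T : R) (phi : R -> 'rV[R]_3 -> R),
    0 < eps <= 1 ->
    (forall t x, 0 <= t <= T -> differentiable (phi t) x) ->
    (* sup_{0<=t<=T} (1+t)^(5/4) || grad_x phi(t) ||_{W^{1,oo}} <= delta, with
       ||g||_{W^{1,oo}} = sup |g| + Lipschitz constant of g *)
    (forall t x y z, 0 <= t <= T -> y != z ->
       (1 + t) `^ (5 / 4) *
       (enorm (grad (phi t) x)
        + enorm (grad (phi t) y - grad (phi t) z) / enorm (y - z)) <= delta) ->
    forall (t : R) (x v : 'rV[R]_3), 0 <= t <= T ->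
      c * (nu_coll gamma q0 v / (2 * eps ^+ 2) + jbr v ^+ 2 / (1 + t) `^ (1 + sigma))
        <= nu_tilde_eps (nu_coll gamma q0) eps vth sigma phi t x v
      /\ (gamma < 0 -> sigma <= 24^-1 ->
          let rho := (sigma * gamma + 2) / (2 - gamma) in
          (3 / 8 < rho < 1) /\
          c * (eps `^ (- (4 / 5)) * (1 + t) `^ (rho - 1))
            <= nu_tilde_eps (nu_coll gamma q0) eps vth sigma phi t x v).
Proof.
move=> /andP[g3 _] _ [c1 [c2 [c1_gt0 [_ nu_bounds]]]] sigma /andP[s0 s4].
exists 1; split=> [//|vth vth01]; have /andP[vth0 vth1] := vth01.
pose k := Num.min (c1 / 8) (vth * sigma / 2).
have k0 : 0 < k by rewrite lt_min !divr_gt0 ?mulr_gt0.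
have kc1 : 8 * k <= c1 by rewrite -ler_pdivlMl // mulrC ge_min lexx.
have kvs : 2 * k <= vth * sigma by rewrite -ler_pdivlMl // mulrC ge_min lexx orbT.
exists (k / 10), (k / 4); do 2 (split; first exact: divr_gt0).
move=> eps T phi eps01 _ W1inf t x v tT; have /andP[t0 _] := tT.
have grad_le : (1 + t) `^ (1 + sigma) * enorm (grad (phi t) x) <= k / 10.
  apply: le_trans _ (enorm_le_of_W1inf_le (powR_ge0 _ _) (fun x y z => W1inf t x y z tT) x).
  by rewrite ler_wpM2r ?enorm_ge0 // ler_powR //; lra.
have /andP[nu_ge _] := nu_bounds v.
have nu0 : 0 <= nu_coll gamma q0 v.
  by apply: le_trans _ nu_ge; rewrite mulr_ge0 ?powR_ge0 // ltW.
have key := nu_tilde_eps_ge (ltW g3) nu_ge eps01 vth01 (ltW s0) t0 (ltW k0) kc1 kvs grad_le.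
split.
  have vs_le : vth * sigma <= 1 by nra.
  apply: le_trans key; rewrite mulrDr lerD2r ler_piMl //; last lra.
  by rewrite divr_ge0 // mulr_ge0 // sqr_ge0.
move=> g_lt0 s24 rho; split; first by apply: interpolation_exponent_bounds; apply/andP.
apply: le_trans key.
have g30 : -3 < gamma <= 0 by rewrite g3 ltW.
have r0 : 0 < jbr v := lt_le_trans ltr01 (jbr_ge1 v).
have interp := interpolation g30 (ltW s0) eps01 t0 r0.
apply: le_trans (ler_wpM2l (ltW (divr_gt0 k0 _)) interp) _ => //.
have ie0 : 0 <= (eps ^+ 2)^-1 by rewrite invr_ge0 sqr_ge0.
rewrite mulrDr lerD2r [(2 * _)^-1]invfM mulrA [in leRHS]mulrA ler_wpM2r //.
by have := powR_ge0 (jbr v) gamma; nra.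
Qed.
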